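(* Let $f:\mathbb{R}^n\to\mathbb{R}\cup\{\infty\}$ be finite and Lipschitz continuous near $\bar x$ and subdifferentially regular at $\bar x$, i.e. $\hat\partial f(\bar x)=\partial f(\bar x)$. Then $\operatorname{calm}f(\bar x)=\operatorname{lip}f(\bar x)$.
   Context: $\operatorname{calm}f(\bar x):=\limsup_{x\to\bar x,\,x\ne\bar x}\frac{|f(x)-f(\bar x)|}{|x-\bar x|}$ and $\operatorname{lip}f(\bar x):=\limsup_{x,x'\to\bar x,\,x\ne x'}\frac{|f(x)-f(x')|}{|x-x'|}$. A vector $v$ is a regular subgradient, $v\in\hat\partial f(\bar x)$, if $f(x)\ge f(\bar x)+\langle v,x-\bar x\rangle+o(|x-\bar x|)$; $v$ is a (general) subgradient, $v\in\partial f(\bar x)$, if there are $x^\nu\to\bar x$ and $v^\nu\in\hat\partial f(x^\nu)$ with $v^\nu\to v$ and $f(x^\nu)\to f(\bar x)$. *)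

From Stdlib Require Import Reals Lra.
Open Scope R_scope.

Definition Rn (n : nat) : Type := { x : nat -> R | forall i, (n <= i)%nat -> x i = 0 }.

Fixpoint sumprod (k : nat) (g h : nat -> R) : R :=
  match k with
  | O => 0
  | S k => sumprod k g h + g k * h k
  end.

Definition inner {n : nat} (x y : Rn n) : R := sumprod n (proj1_sig x) (proj1_sig y).
Definition diff {n : nat} (x y : Rn n) : nat -> R := fun i => proj1_sig x i - proj1_sig y i.
Definition dist {n : nat} (x y : Rn n) : R := sqrt (sumprod n (diff x y) (diff x y)).
Definition inner_diff {n : nat} (v x y : Rn n) : R := sumprod n (proj1_sig v) (diff x y).

Inductive ER : Type := ERfin (r : R) | ERpinf | ERminf.

Definition ER_le (a b : ER) : Prop :=
  match a, b with
  | ERminf, _ => True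
  | _, ERpinf => True
  | ERfin x, ERfin y => x <= y
  | _, _ => False
  end.

Definition is_lub_ER (S : ER -> Prop) (s : ER) : Prop :=
  (forall a, S a -> ER_le a s) /\ (forall u, (forall a, S a -> ER_le a u) -> ER_le s u).
Definition is_glb_ER (S : ER -> Prop) (s : ER) : Prop :=
  (forall a, S a -> ER_le s a) /\ (forall u, (forall a, S a -> ER_le u a) -> ER_le u s).

Definition is_limsup (S : R -> ER -> Prop) (l : ER) : Prop :=
  is_glb_ER (fun s => exists d, 0 < d /\ is_lub_ER (S d) s) l.

(** f : R^n -> R u {+oo}, with None = +oo.  Difference quotient |a - b| / d,
    with the convention that it is +oo when a value is infinite. *)
Definition dq (a b : option R) (d : R) : ER :=
  match a, b with
  | Some a, Some b => ERfin (Rabs (a - b) / d)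
  | _, _ => ERpinf
  end.

Definition calm_set {n : nat} (f : Rn n -> option R) (xb : Rn n) (d : R) : ER -> Prop :=
  fun q => exists x, x <> xb /\ dist x xb < d /\ q = dq (f x) (f xb) (dist x xb).

Definition lip_set {n : nat} (f : Rn n -> option R) (xb : Rn n) (d : R) : ER -> Prop :=
  fun q => exists x x', x <> x' /\ dist x xb < d /\ dist x' xb < d /\
                        q = dq (f x) (f x') (dist x x').

Definition is_calm {n : nat} (f : Rn n -> option R) (xb : Rn n) (c : ER) : Prop :=
  is_limsup (calm_set f xb) c.
Definition is_lip {n : nat} (f : Rn n -> option R) (xb : Rn n) (c : ER) : Prop :=
  is_limsup (lip_set f xb) c.

Definition finite_lipschitz_near {n : nat} (f : Rn n -> option R) (xb : Rn n) : Prop :=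
  exists d L, 0 < d /\
    forall x x', dist x xb < d -> dist x' xb < d ->
      exists a b, f x = Some a /\ f x' = Some b /\ Rabs (a - b) <= L * dist x x'.

Definition regular_subgradient {n : nat} (f : Rn n -> option R) (xb v : Rn n) : Prop :=
  exists fb, f xb = Some fb /\
    forall eps, 0 < eps -> exists d, 0 < d /\
      forall x, dist x xb < d ->
        match f x with
        | None => True
        | Some fx => fx >= fb + inner_diff v x xb - eps * dist x xb
        end.

Definition subgradient {n : nat} (f : Rn n -> option R) (xb v : Rn n) : Prop :=
  exists (xs vs : nat -> Rn n) (fs : nat -> R) (fb : R),
    Un_cv (fun k => dist (xs k) xb) 0 /\
    (forall k, regular_subgradient f (xs k) (vs k)) /\
    Un_cv (fun k => dist (vs k) v) 0 /\
    (forall k, f (xs k) = Some (fs k)) /\ f xb = Some fb /\ Un_cv fs fb.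

(** Always [calm f(xb) <= lip f(xb)]: calmness quotients are Lipschitz
    quotients with one point pinned at [xb].  Conversely, suppose [calm f(xb) < b < a]
    but [lip f(xb) > a].  Arbitrarily near [xb] there are then pairs [x, x'] with
    [|f x - f x'| > a |x - x'|]; minimising a penalised function between them (a
    quantitative mean value argument of Zagrodny type) yields nearby regular
    subgradients of norm [>= s := (a + b) / 2].  They are bounded by the Lipschitz
    constant, so a subsequence converges to a subgradient [v] at [xb] with [|v| >= s].
    By regularity [v] is a regular subgradient, and moving from [xb] along [v] shows
    [calm f(xb) >= |v| > b], a contradiction. *)

From Stdlib Require Import Reals Lra Lia Psatz Classical ClassicalEpsilon
  FunctionalExtensionality ProofIrrelevance.
Open Scope R_scope.

(** * Euclidean algebra of [sumprod] *)

Lemma sp_ext k g g' h h' :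
  (forall i, (i < k)%nat -> g i = g' i /\ h i = h' i) -> sumprod k g h = sumprod k g' h'.
Proof.
  induction k as [|k IH]; intros Heq; simpl; [reflexivity|].
  destruct (Heq k) as [-> ->]; [lia|]. rewrite IH; [reflexivity|]. intros i Hi; apply Heq; lia.
Qed.

Lemma sp_sym k g h : sumprod k g h = sumprod k h g.
Proof. induction k as [|k IH]; simpl; [|rewrite IH]; ring. Qed.

Lemma sp_linl k a b g1 g2 h :
  sumprod k (fun i => a * g1 i + b * g2 i) h = a * sumprod k g1 h + b * sumprod k g2 h.
Proof. induction k as [|k IH]; simpl; [|rewrite IH]; ring. Qed.

Lemma sp_scal_l k a g h : sumprod k (fun i => a * g i) h = a * sumprod k g h.
Proof. induction k as [|k IH]; simpl; [|rewrite IH]; ring. Qed.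

Lemma sp_nonneg k g : 0 <= sumprod k g g.
Proof. induction k as [|k IH]; simpl; nra. Qed.

(** Expansion of [|g + l h|^2]; with [l] chosen well it gives Cauchy-Schwarz. *)
Lemma sp_quadratic k g h l :
  sumprod k (fun i => g i + l * h i) (fun i => g i + l * h i)
  = sumprod k g g + 2 * l * sumprod k g h + l * l * sumprod k h h.
Proof. induction k as [|k IH]; simpl; [|rewrite IH]; ring. Qed.

Lemma sp_cauchy_schwarz_sq k g h :
  sumprod k g h * sumprod k g h <= sumprod k g g * sumprod k h h.
Proof.
  set (A := sumprod k g h); set (G := sumprod k g g); set (H := sumprod k h h).
  assert (HG : 0 <= G) by apply sp_nonneg.
  assert (HH : 0 <= H) by apply sp_nonneg.
  destruct (Req_dec H 0) as [H0|Hpos].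
  - (* if [|h| = 0], every [G + 2 l A] is nonnegative, which forces [A = 0] *)
    destruct (Req_dec A 0) as [A0|An]; [rewrite A0, H0; lra|].
    pose proof (sp_nonneg k (fun i => g i + (- (G + 1) / (2 * A)) * h i)) as Hq.
    rewrite sp_quadratic in Hq. fold A G H in Hq. rewrite H0 in Hq.
    replace (2 * (- (G + 1) / (2 * A)) * A) with (- (G + 1)) in Hq by (field; lra). lra.
  - pose proof (sp_nonneg k (fun i => g i + (- A / H) * h i)) as Hq.
    rewrite sp_quadratic in Hq. fold A G H in Hq.
    replace (G + 2 * (- A / H) * A + - A / H * (- A / H) * H) with ((G * H - A * A) / H) in Hq
      by (field; lra).
    assert (0 <= G * H - A * A); [|lra].
    apply (Rmult_le_compat_r H) in Hq; [|lra].
    unfold Rdiv in Hq. rewrite Rmult_assoc, Rinv_l in Hq by lra. lra.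
Qed.

Definition nrm (k : nat) (g : nat -> R) : R := sqrt (sumprod k g g).

Lemma nrm_nonneg k g : 0 <= nrm k g.
Proof. apply sqrt_pos. Qed.

Lemma nrm_sq k g : nrm k g * nrm k g = sumprod k g g.
Proof. apply sqrt_sqrt, sp_nonneg. Qed.

Lemma nrm_ext k g h : (forall i, (i < k)%nat -> g i = h i) -> nrm k g = nrm k h.
Proof. intros Heq. unfold nrm. f_equal. apply sp_ext. intros i Hi; auto. Qed.

Lemma cauchy_schwarz k g h : Rabs (sumprod k g h) <= nrm k g * nrm k h.
Proof.
  pose proof (nrm_nonneg k g); pose proof (nrm_nonneg k h).
  rewrite <- (Rabs_pos_eq (nrm k g * nrm k h)) by nra.
  apply Rsqr_le_abs_0. unfold Rsqr.
  replace (nrm k g * nrm k h * (nrm k g * nrm k h)) with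
    ((nrm k g * nrm k g) * (nrm k h * nrm k h)) by ring.
  rewrite !nrm_sq. apply sp_cauchy_schwarz_sq.
Qed.

Lemma nrm_le k g c : 0 <= c -> sumprod k g g <= c * c -> nrm k g <= c.
Proof. intros Hc Hle. unfold nrm. rewrite <- (sqrt_square c) by exact Hc. apply sqrt_le_1_alt, Hle. Qed.

Lemma nrm_triangle k g h : nrm k (fun i => g i + h i) <= nrm k g + nrm k h.
Proof.
  pose proof (nrm_nonneg k g); pose proof (nrm_nonneg k h).
  apply nrm_le; [lra|].
  rewrite (sp_ext k _ (fun i => g i + 1 * h i) _ (fun i => g i + 1 * h i))
    by (intros; split; ring).
  rewrite sp_quadratic, <- !nrm_sq.
  pose proof (Rle_abs (sumprod k g h)); pose proof (cauchy_schwarz k g h). nra.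
Qed.

Lemma nrm_scal k a g : nrm k (fun i => a * g i) = Rabs a * nrm k g.
Proof.
  unfold nrm. rewrite sp_scal_l, sp_sym, sp_scal_l, <- Rmult_assoc.
  rewrite sqrt_mult_alt by nra. f_equal. rewrite <- sqrt_Rsqr_abs. reflexivity.
Qed.

Lemma coord_le_nrm k g i : (i < k)%nat -> Rabs (g i) <= nrm k g.
Proof.
  intros Hi. unfold nrm. rewrite <- sqrt_Rsqr_abs. apply sqrt_le_1_alt. unfold Rsqr.
  induction k as [|k IH]; simpl; [lia|].
  pose proof (sp_nonneg k g).
  destruct (Nat.eq_dec i k) as [->|Hne]; [nra|]. specialize (IH ltac:(lia)). nra.
Qed.

Lemma unit_pairing_le k e h : sumprod k e e = 1 -> Rabs (sumprod k e h) <= nrm k h.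
Proof. intros He. pose proof (cauchy_schwarz k e h). unfold nrm at 1 in H. rewrite He, sqrt_1 in H. lra. Qed.

Lemma unit_pairing_sq_le k e h :
  sumprod k e e = 1 -> sumprod k e h * sumprod k e h <= sumprod k h h.
Proof. intros He. pose proof (sp_cauchy_schwarz_sq k e h). rewrite He in H. lra. Qed.

(** * Points of [R^n] *)

Notation pt := (@proj1_sig (nat -> R) _) (only parsing).

Lemma mkRn_vanish (n : nat) (h : nat -> R) :
  forall i, (n <= i)%nat -> (if Nat.ltb i n then h i else 0) = 0.
Proof. intros i Hi. destruct (Nat.ltb_spec i n); [lia|reflexivity]. Qed.

Definition mkRn (n : nat) (h : nat -> R) : Rn n := exist _ _ (mkRn_vanish n h).

Lemma mkRn_coord n h i : (i < n)%nat -> pt (mkRn n h) i = h i.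
Proof. intros Hi. simpl. destruct (Nat.ltb_spec i n); [reflexivity|lia]. Qed.

Lemma Rn_eq {n} (x y : Rn n) : (forall i, (i < n)%nat -> pt x i = pt y i) -> x = y.
Proof.
  destruct x as [x Hx], y as [y Hy]; simpl; intros Heq.
  assert (x = y) as <-.
  { apply functional_extensionality; intros i.
    destruct (Nat.lt_ge_cases i n); [auto|rewrite Hx, Hy; auto]. }
  f_equal. apply proof_irrelevance.
Qed.

Lemma dist_nonneg {n} (x y : Rn n) : 0 <= dist x y.
Proof. apply sqrt_pos. Qed.

Lemma dist_sq {n} (x y : Rn n) : dist x y * dist x y = sumprod n (diff x y) (diff x y).
Proof. apply nrm_sq. Qed.

Lemma dist_self {n} (x : Rn n) : dist x x = 0.
Proof.
  unfold dist. rewrite (sp_ext n _ (fun _ => 0) _ (fun _ => 0)) by (intros; unfold diff; split; ring).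
  replace (sumprod n (fun _ => 0) (fun _ => 0)) with 0; [apply sqrt_0|].
  clear. induction n as [|n IH]; simpl; [|rewrite <- IH]; ring.
Qed.

Lemma dist_sym {n} (x y : Rn n) : dist x y = dist y x.
Proof.
  unfold dist. fold (nrm n (diff x y)) (nrm n (diff y x)).
  rewrite (nrm_ext n (diff x y) (fun i => -1 * diff y x i)) by (intros; unfold diff; ring).
  rewrite nrm_scal, Rabs_left by lra. ring.
Qed.

Lemma dist_triangle {n} (x y z : Rn n) : dist x z <= dist x y + dist y z.
Proof.
  unfold dist. fold (nrm n (diff x z)) (nrm n (diff x y)) (nrm n (diff y z)).
  rewrite (nrm_ext n (diff x z) (fun i => diff x y i + diff y z i)) by (intros; unfold diff; ring).
  apply nrm_triangle.
Qed.

Lemma dist_coord {n} (x y : Rn n) i : (i < n)%nat -> Rabs (pt x i - pt y i) <= dist x y.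
Proof. apply (coord_le_nrm n (diff x y)). Qed.

Lemma dist_eq0 {n} (x y : Rn n) : dist x y = 0 -> x = y.
Proof.
  intros H0. apply Rn_eq. intros i Hi. pose proof (dist_coord x y i Hi) as Hc.
  rewrite H0 in Hc. pose proof (Rle_abs (pt x i - pt y i)).
  pose proof (Rle_abs (- (pt x i - pt y i))). rewrite Rabs_Ropp in *. lra.
Qed.

Lemma dist_pos {n} (x y : Rn n) : x <> y -> 0 < dist x y.
Proof.
  intros Hne. destruct (dist_nonneg x y) as [|H0]; [assumption|].
  exfalso. apply Hne, dist_eq0. auto.
Qed.

Definition nv {n} (v : Rn n) : R := nrm n (pt v).

Definition ray {n} (x : Rn n) (t : R) (v : Rn n) : Rn n := mkRn n (fun i => pt x i + t * pt v i).

Lemma dist_ray {n} (x v : Rn n) t : dist (ray x t v) x = Rabs t * nv v.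
Proof.
  unfold dist, nv. fold (nrm n (diff (ray x t v) x)). rewrite <- nrm_scal.
  apply nrm_ext. intros i Hi. unfold diff, ray. rewrite mkRn_coord by exact Hi. ring.
Qed.

Lemma inner_diff_ray {n} (x v : Rn n) t : inner_diff v (ray x t v) x = t * (nv v * nv v).
Proof.
  unfold inner_diff, nv. rewrite nrm_sq, <- sp_scal_l, sp_sym. apply sp_ext.
  intros i Hi. unfold diff, ray. rewrite mkRn_coord by exact Hi. split; ring.
Qed.

Lemma nv_triangle {n} (v w : Rn n) : nv v <= nv w + dist v w.
Proof.
  unfold nv, dist. fold (nrm n (diff v w)).
  rewrite (nrm_ext n (pt v) (fun i => pt w i + diff v w i)) by (intros; unfold diff; ring).
  apply nrm_triangle.
Qed.

(** * Extended reals and limsups *)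

Lemma ER_le_trans a b c : ER_le a b -> ER_le b c -> ER_le a c.
Proof. destruct a, b, c; simpl; auto; try lra; tauto. Qed.

Lemma ER_le_antisym a b : ER_le a b -> ER_le b a -> a = b.
Proof. destruct a, b; simpl; try tauto. intros; f_equal; lra. Qed.

Lemma ER_le_total a b : ER_le a b \/ ER_le b a.
Proof. destruct a, b; simpl; auto. lra. Qed.

Lemma lub_exists (S : ER -> Prop) : exists s, is_lub_ER S s.
Proof.
  destruct (classic (S ERpinf)) as [Hp|Hp].
  { exists ERpinf. split; [intros [] _; simpl; auto|].
    intros u Hu. specialize (Hu _ Hp). destruct u; simpl in *; auto. }
  destruct (classic (exists r, S (ERfin r))) as [[r0 Hr0]|Hne].
  - destruct (classic (bound (fun r => S (ERfin r)))) as [Hb|Hub].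
    + destruct (completeness _ Hb (ex_intro _ r0 Hr0)) as [l [Hl1 Hl2]].
      exists (ERfin l). split.
      * intros [r| |] Ha; simpl; [apply Hl1, Ha | apply Hp, Ha | exact I].
      * intros [u| |] Hu; simpl; auto.
        -- apply Hl2. intros x Hx. exact (Hu _ Hx).
        -- exact (Hu _ Hr0).
    + exists ERpinf. split; [intros [] _; simpl; auto|].
      intros [u| |] Hu; simpl; auto.
      * apply Hub. exists u. intros x Hx. exact (Hu _ Hx).
      * exact (Hu _ Hr0).
  - exists ERminf. split; [|intros [] _; simpl; auto].
    intros [r| |] Ha; simpl; auto. apply Hne; eauto.
Qed.

Definition ER_opp (a : ER) : ER :=
  match a with ERfin r => ERfin (- r) | ERpinf => ERminf | ERminf => ERpinf end.

Lemma ER_opp_involutive a : ER_opp (ER_opp a) = a.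
Proof. destruct a; simpl; auto. f_equal; ring. Qed.

Lemma ER_opp_le a b : ER_le a b -> ER_le (ER_opp b) (ER_opp a).
Proof. destruct a, b; simpl; auto; lra. Qed.

(** Infima exist too, as negated suprema of the negated set. *)
Lemma glb_exists (S : ER -> Prop) : exists s, is_glb_ER S s.
Proof.
  destruct (lub_exists (fun a => S (ER_opp a))) as [s [Hub Hleast]].
  exists (ER_opp s). split.
  - intros a Ha. rewrite <- (ER_opp_involutive a) in Ha.
    rewrite <- (ER_opp_involutive a). apply ER_opp_le, Hub, Ha.
  - intros u Hu. rewrite <- (ER_opp_involutive u). apply ER_opp_le, Hleast.
    intros a Ha. rewrite <- (ER_opp_involutive a). apply ER_opp_le, Hu, Ha.
Qed.

Lemma limsup_exists (S : R -> ER -> Prop) : exists l, is_limsup S l.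
Proof. apply glb_exists. Qed.

Lemma limsup_unique S a b : is_limsup S a -> is_limsup S b -> a = b.
Proof. intros [H1 H2] [H3 H4]. apply ER_le_antisym; auto. Qed.

Definition eventually_below (S : R -> ER -> Prop) (b : R) : Prop :=
  exists d, 0 < d /\ forall q, S d q -> ER_le q (ERfin b).

Lemma limsup_monotone (S1 S2 : R -> ER -> Prop) c1 c2 :
  is_limsup S1 c1 -> is_limsup S2 c2 -> (forall d q, S1 d q -> S2 d q) -> ER_le c1 c2.
Proof.
  intros Hc1 [_ Hc2] Hsub. apply Hc2. intros s2 [d [Hd Hs2]].
  destruct (lub_exists (S1 d)) as [s1 Hs1].
  apply ER_le_trans with s1.
  - apply (proj1 Hc1). exists d; auto.
  - apply (proj2 Hs1). intros q Hq. apply (proj1 Hs2), Hsub, Hq.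
Qed.

Lemma limsup_eventually_below S c b : is_limsup S c -> ~ ER_le (ERfin b) c -> eventually_below S b.
Proof.
  intros [_ Hc] Hcb. apply NNPP. intros Hnot. apply Hcb, Hc.
  intros s [d [Hd Hs]]. destruct (ER_le_total (ERfin b) s) as [|Hsb]; [assumption|].
  exfalso. apply Hnot. exists d. split; [exact Hd|].
  intros q Hq. apply ER_le_trans with s; [apply (proj1 Hs), Hq | exact Hsb].
Qed.

Lemma limsup_le_of_eventually_below S c a : is_limsup S c -> eventually_below S a -> ER_le c (ERfin a).
Proof.
  intros [Hc _] [d [Hd Ha]]. destruct (lub_exists (S d)) as [s Hs].
  apply ER_le_trans with s; [apply Hc; exists d; auto | apply (proj2 Hs), Ha].
Qed.

Lemma limsup_le_of_transfer S1 S2 c1 c2 :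
  is_limsup S1 c1 -> is_limsup S2 c2 ->
  (forall b a, b < a -> eventually_below S1 b -> eventually_below S2 a) -> ER_le c2 c1.
Proof.
  intros Hc1 Hc2 Htransfer.
  assert (Habove : forall a, ~ ER_le (ERfin a) c1 -> ER_le c2 (ERfin a)).
  { intros a Ha.
    assert (exists b, b < a /\ ~ ER_le (ERfin b) c1) as [b [Hba Hb]].
    { destruct c1 as [c| |]; simpl in *; [exists ((c + a) / 2) | tauto | exists (a - 1)]; split; lra. }
    apply (limsup_le_of_eventually_below S2), (Htransfer b); auto.
    apply (limsup_eventually_below S1 c1); auto. }
  destruct c1 as [c| |], c2 as [u| |]; simpl; auto.
  - destruct (Rle_dec u c) as [|Hcu]; [assumption|].
    specialize (Habove ((c + u) / 2)). simpl in Habove. lra.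
  - specialize (Habove (c + 1)). simpl in Habove. lra.
  - specialize (Habove (u - 1)). simpl in Habove. lra.
  - exact (Habove 0 (fun H => H)).
Qed.

(** * Sequences and compactness in [R^n] *)

Lemma le_of_le_plus_eps A B : (forall eps, 0 < eps -> A <= B + eps) -> A <= B.
Proof.
  intros H. destruct (Rle_dec A B) as [|Hn]; [assumption|].
  specialize (H ((A - B) / 2) ltac:(lra)). lra.
Qed.

Lemma Rdiv_nonneg a b : 0 <= a -> 0 < b -> 0 <= a / b.
Proof. intros Ha Hb. apply Rmult_le_pos; [exact Ha | apply Rlt_le, Rinv_0_lt_compat, Hb]. Qed.

Lemma inv_succ_pos k : 0 < / (INR k + 1).
Proof. apply Rinv_0_lt_compat. pose proof (pos_INR k). lra. Qed.

Lemma inv_succ_le_1 k : / (INR k + 1) <= 1.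
Proof. rewrite <- Rinv_1. apply Rinv_le_contravar; [lra|]. pose proof (pos_INR k). lra. Qed.

Lemma inv_succ_small eps : 0 < eps -> exists N, forall k, (N <= k)%nat -> / (INR k + 1) < eps.
Proof.
  intros Heps. destruct (archimed_cor1 eps Heps) as [N [HN HN0]]. exists N. intros k Hk.
  apply Rle_lt_trans with (/ INR N); [|assumption].
  apply Rinv_le_contravar; [apply lt_0_INR; lia|]. apply le_INR in Hk. lra.
Qed.

Lemma dist_cv_eventually {n} (u : nat -> Rn n) y eps :
  Un_cv (fun k => dist (u k) y) 0 -> 0 < eps -> exists N, forall k, (N <= k)%nat -> dist (u k) y < eps.
Proof.
  intros Hcv Heps. destruct (Hcv eps Heps) as [N HN]. exists N. intros k Hk.
  specialize (HN k Hk). unfold R_dist in HN.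
  rewrite Rminus_0_r, Rabs_pos_eq in HN by apply dist_nonneg. exact HN.
Qed.

Lemma cv0_of_le_inv_succ (u : nat -> R) c :
  (forall k, 0 <= u k <= c / (INR k + 1)) -> Un_cv u 0.
Proof.
  intros Hu eps Heps. destruct (inv_succ_small (eps / (Rabs c + 1))) as [N HN].
  { apply Rdiv_lt_0_compat; [exact Heps|]. pose proof (Rabs_pos c). lra. }
  exists N. intros k Hk. specialize (Hu k). specialize (HN k Hk). pose proof (inv_succ_pos k).
  unfold R_dist. rewrite Rminus_0_r, Rabs_pos_eq by lra.
  pose proof (Rle_abs c). pose proof (Rabs_pos c).
  apply Rle_lt_trans with (c / (INR k + 1)); [lra|].
  apply Rle_lt_trans with ((Rabs c + 1) * / (INR k + 1)); [unfold Rdiv; nra|].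
  apply Rlt_le_trans with ((Rabs c + 1) * (eps / (Rabs c + 1))); [apply Rmult_lt_compat_l; lra|].
  right. field. lra.
Qed.

Definition extraction (phi : nat -> nat) : Prop := forall k, (phi k < phi (S k))%nat.

Lemma extraction_ge phi : extraction phi -> forall k, (k <= phi k)%nat.
Proof. intros H k. induction k as [|k IH]; [lia|]. specialize (H k). lia. Qed.

Lemma extraction_mono phi : extraction phi -> forall j k, (j <= k)%nat -> (phi j <= phi k)%nat.
Proof. intros H j k Hjk. induction Hjk as [|m _ IH]; [lia|]. specialize (H m). lia. Qed.

Lemma extraction_compose phi psi : extraction phi -> extraction psi -> extraction (fun k => phi (psi k)).
Proof.
  intros Hphi Hpsi k. specialize (Hpsi k).
  pose proof (extraction_mono phi Hphi (S (psi k)) (psi (S k)) Hpsi). specialize (Hphi (psi k)). lia.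
Qed.

Lemma cv_extraction u l phi : extraction phi -> Un_cv u l -> Un_cv (fun k => u (phi k)) l.
Proof.
  intros Hphi Hcv eps Heps. destruct (Hcv eps Heps) as [N HN]. exists N. intros k Hk.
  apply HN. pose proof (extraction_ge phi Hphi k). lia.
Qed.

(** Bolzano-Weierstrass on [R] with an explicit subsequence: the library only
    provides a cluster point, from which we extract. *)
Lemma bounded_real_subseq (u : nat -> R) :
  (exists B, forall k, Rabs (u k) <= B) -> exists phi l, extraction phi /\ Un_cv (fun k => u (phi k)) l.
Proof.
  intros [B HB].
  destruct (Bolzano_Weierstrass u (fun c => -B <= c <= B) (compact_P3 (-B) B)) as [l Hl].
  { intros k. specialize (HB k). pose proof (Rle_abs (u k)). pose proof (Rle_abs (- u k)).
    rewrite Rabs_Ropp in *. lra. }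
  assert (Hclose : forall N k, exists p, (N <= p)%nat /\ Rabs (u p - l) < / (INR k + 1)).
  { intros N k. destruct (Hl (fun y => Rabs (y - l) < / (INR k + 1)) N) as [p Hp]; [|eauto].
    exists (mkposreal _ (inv_succ_pos k)). intros y Hy. exact Hy. }
  destruct (choice _ (fun Nk : nat * nat => Hclose (fst Nk) (snd Nk))) as [F HF].
  set (phi := fix phi k := match k with O => F (O, O) | S k => F (S (phi k), S k) end).
  exists phi, l. split.
  - intros k. simpl. destruct (HF (S (phi k), S k)) as [Hge _]. simpl in Hge. lia.
  - intros eps Heps. destruct (inv_succ_small eps Heps) as [N HN]. exists N. intros k Hk.
    unfold R_dist. apply Rlt_trans with (/ (INR k + 1)); [|auto].
    destruct k; simpl; apply HF.
Qed.

(** Diagonal extraction, one coordinate at a time. *)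
Lemma bounded_coords_subseq (ys : nat -> nat -> R) (m : nat) :
  (forall i, (i < m)%nat -> exists B, forall k, Rabs (ys k i) <= B) ->
  exists phi l, extraction phi /\ forall i, (i < m)%nat -> Un_cv (fun k => ys (phi k) i) (l i).
Proof.
  induction m as [|m IH]; intros HB.
  - exists (fun k => k), (fun _ => 0). split; [intros k; lia | intros i Hi; lia].
  - destruct IH as [phi [l [Hphi Hl]]]; [intros i Hi; apply HB; lia|].
    destruct (bounded_real_subseq (fun k => ys (phi k) m)) as [psi [lm [Hpsi Hlm]]].
    { destruct (HB m ltac:(lia)) as [B HBm]. exists B. intros k. apply HBm. }
    exists (fun k => phi (psi k)), (fun i => if Nat.eqb i m then lm else l i). split.
    + apply extraction_compose; assumption.
    + intros i Hi. destruct (Nat.eqb_spec i m) as [->|Hne]; [exact Hlm|].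
      apply (cv_extraction (fun k => ys (phi k) i)); [assumption|]. apply Hl. lia.
Qed.

Lemma cv_const c : Un_cv (fun _ => c) c.
Proof. intros eps Heps. exists O. intros k _. unfold R_dist. rewrite Rminus_diag, Rabs_R0. exact Heps. Qed.

Lemma sp_diff_cv m (g : nat -> nat -> R) l :
  (forall i, (i < m)%nat -> Un_cv (fun k => g k i) (l i)) ->
  Un_cv (fun k => sumprod m (fun i => g k i - l i) (fun i => g k i - l i)) 0.
Proof.
  induction m as [|m IH]; intros Hcv; simpl.
  - apply cv_const.
  - replace 0 with (0 + (l m - l m) * (l m - l m)) by ring.
    apply CV_plus; [apply IH; intros i Hi; apply Hcv; lia|].
    apply CV_mult; apply CV_minus; [apply Hcv; lia | apply cv_const | apply Hcv; lia | apply cv_const].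
Qed.

Lemma sqrt_cv0 u : (forall k, 0 <= u k) -> Un_cv u 0 -> Un_cv (fun k => sqrt (u k)) 0.
Proof.
  intros Hpos Hcv eps Heps. destruct (Hcv (eps * eps) ltac:(nra)) as [N HN]. exists N. intros k Hk.
  specialize (HN k Hk). unfold R_dist in *. rewrite Rminus_0_r in *.
  rewrite Rabs_pos_eq in * by (auto; apply sqrt_pos).
  rewrite <- (sqrt_square eps) by lra. apply sqrt_lt_1; auto; nra.
Qed.

Lemma bounded_Rn_subseq {n} (ys : nat -> Rn n) :
  (forall i, (i < n)%nat -> exists B, forall k, Rabs (pt (ys k) i) <= B) ->
  exists phi y, extraction phi /\ Un_cv (fun k => dist (ys (phi k)) y) 0.
Proof.
  intros HB. destruct (bounded_coords_subseq (fun k i => pt (ys k) i) n HB) as [phi [l [Hphi Hl]]].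
  exists phi, (mkRn n l). split; [assumption|].
  apply sqrt_cv0; [intros; apply sp_nonneg|].
  eapply Un_cv_ext; [|apply (sp_diff_cv n (fun k i => pt (ys (phi k)) i) l Hl)].
  intros k. apply sp_ext. intros i Hi. unfold diff. rewrite mkRn_coord by exact Hi. auto.
Qed.

Lemma coords_bounded_of_dist {n} (ys : nat -> Rn n) c rho :
  (forall k, dist (ys k) c <= rho) -> forall i, (i < n)%nat -> exists B, forall k, Rabs (pt (ys k) i) <= B.
Proof.
  intros Hb i Hi. exists (Rabs (pt c i) + rho). intros k.
  pose proof (dist_coord (ys k) c i Hi). specialize (Hb k).
  pose proof (Rabs_triang (pt (ys k) i - pt c i) (pt c i)).
  replace (pt (ys k) i - pt c i + pt c i) with (pt (ys k) i) in * by ring. lra.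
Qed.

Lemma le_of_cv_lipschitz1 {n} (g : Rn n -> R) (ys : nat -> Rn n) z c :
  (forall y w, g y - g w <= dist y w) -> (forall k, g (ys k) <= c) ->
  Un_cv (fun k => dist (ys k) z) 0 -> g z <= c.
Proof.
  intros Hg Hle Hcv. apply le_of_le_plus_eps. intros eps Heps.
  destruct (dist_cv_eventually ys z eps Hcv Heps) as [N HN].
  specialize (HN N (le_n N)). specialize (Hle N). specialize (Hg z (ys N)).
  rewrite dist_sym in Hg. lra.
Qed.

Lemma min_attained {n} (D : Rn n -> Prop) (Phi : Rn n -> R) (c : Rn n) (rho m : R) :
  (exists y, D y) ->
  (forall y, D y -> dist y c <= rho) ->
  (forall y, D y -> m <= Phi y) ->
  (forall (ys : nat -> Rn n) z, (forall k, D (ys k)) -> Un_cv (fun k => dist (ys k) z) 0 -> D z) ->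
  (forall z, D z -> exists C, 0 <= C /\ forall y, D y -> Phi z <= Phi y + C * dist y z) ->
  exists z, D z /\ forall y, D y -> Phi z <= Phi y.
Proof.
  intros [y0 Hy0] Hbd Hlow Hclosed Hlsc.
  set (E := fun v => exists y, D y /\ v = - Phi y).
  destruct (completeness E) as [l [Hub Hleast]].
  { exists (- m). intros v [y [Hy ->]]. specialize (Hlow y Hy). lra. }
  { exists (- Phi y0), y0. auto. }
  assert (Hinf : forall y, D y -> - l <= Phi y).
  { intros y Hy. assert (E (- Phi y)) as HE by (exists y; auto). apply Hub in HE. lra. }
  assert (Hnear : forall k, exists y, D y /\ Phi y < - l + / (INR k + 1)).
  { intros k. apply NNPP. intros Hnot. pose proof (inv_succ_pos k).
    assert (l <= l - / (INR k + 1)); [|lra].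
    apply Hleast. intros v [y [Hy ->]]. destruct (Rle_dec (- Phi y) (l - / (INR k + 1))); [assumption|].
    exfalso. apply Hnot. exists y. split; [assumption | lra]. }
  destruct (choice _ Hnear) as [ys Hys].
  destruct (bounded_Rn_subseq ys) as [phi [z [Hphi Hcv]]].
  { apply (coords_bounded_of_dist ys c rho). intros k. apply Hbd, Hys. }
  assert (Hz : D z) by (apply (Hclosed (fun k => ys (phi k))); [intros; apply Hys | exact Hcv]).
  exists z. split; [exact Hz|]. intros y Hy. apply Rle_trans with (- l); [|apply Hinf, Hy].
  destruct (Hlsc z Hz) as [C [HC Hzc]].
  apply le_of_le_plus_eps. intros eps Heps.
  destruct (dist_cv_eventually _ _ (eps / 2 / (C + 1)) Hcv) as [N1 HN1];
    [apply Rdiv_lt_0_compat; lra|].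
  destruct (inv_succ_small (eps / 2)) as [N2 HN2]; [lra|].
  set (k := Nat.max N1 N2). specialize (HN1 k ltac:(lia)).
  specialize (HN2 (phi k) ltac:(pose proof (extraction_ge phi Hphi k); lia)).
  specialize (Hzc (ys (phi k)) (proj1 (Hys (phi k)))). destruct (Hys (phi k)) as [_ Hk].
  assert (C * dist (ys (phi k)) z <= eps / 2); [|lra].
  apply Rle_trans with ((C + 1) * (eps / 2 / (C + 1))).
  - pose proof (dist_nonneg (ys (phi k)) z). nra.
  - right. field. lra.
Qed.


(** * Lipschitz functions and their regular subgradients *)

(** Value of [f] at [y], defaulting to [0] where [f] is infinite. *)
Definition fv {n} (f : Rn n -> option R) (y : Rn n) : R :=
  match f y with Some a => a | None => 0 end.

Definition lipschitz_on {n} (f : Rn n -> option R) (xb : Rn n) (dL L0 : R) : Prop :=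
  forall y z, dist y xb < dL -> dist z xb < dL ->
    exists p q, f y = Some p /\ f z = Some q /\ Rabs (p - q) <= L0 * dist y z.

Lemma lipschitz_on_some {n} (f : Rn n -> option R) xb dL L0 y :
  lipschitz_on f xb dL L0 -> dist y xb < dL -> f y = Some (fv f y).
Proof. intros HL Hy. destruct (HL y y Hy Hy) as [p [q [Hp _]]]. unfold fv. rewrite Hp. reflexivity. Qed.

Lemma lipschitz_on_fv {n} (f : Rn n -> option R) xb dL L0 y z :
  lipschitz_on f xb dL L0 -> dist y xb < dL -> dist z xb < dL -> Rabs (fv f y - fv f z) <= L0 * dist y z.
Proof. intros HL Hy Hz. destruct (HL y z Hy Hz) as [p [q [Hp [Hq Hpq]]]]. unfold fv. rewrite Hp, Hq. exact Hpq. Qed.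

Lemma lipschitz_on_of_near {n} (f : Rn n -> option R) xb :
  finite_lipschitz_near f xb -> exists dL L0, 0 < dL /\ 0 <= L0 /\ lipschitz_on f xb dL L0.
Proof.
  intros [dL [L [HdL HL]]]. exists dL, (Rabs L). split; [exact HdL|]. split; [apply Rabs_pos|].
  intros y z Hy Hz. destruct (HL y z Hy Hz) as [p [q [Hp [Hq Hpq]]]]. exists p, q. split; [|split]; auto.
  pose proof (Rle_abs L). pose proof (dist_nonneg y z). nra.
Qed.

Lemma proximal_regular_subgradient {n} (f : Rn n -> option R) (y0 v : Rn n) fy0 delta C :
  f y0 = Some fy0 -> 0 < delta -> 0 <= C ->
  (forall y fy, dist y y0 < delta -> f y = Some fy ->
     fy >= fy0 + inner_diff v y y0 - C * (dist y y0 * dist y y0)) ->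
  regular_subgradient f y0 v.
Proof.
  intros Hf0 Hdelta HC Hprox. exists fy0. split; [exact Hf0|].
  intros eps Heps. exists (Rmin delta (eps / (C + 1))). split.
  { apply Rmin_pos; [exact Hdelta | apply Rdiv_lt_0_compat; lra]. }
  intros y Hy. pose proof (Rmin_l delta (eps / (C + 1))). pose proof (Rmin_r delta (eps / (C + 1))).
  destruct (f y) as [fy|] eqn:Hfy; [|exact I].
  specialize (Hprox y fy ltac:(lra) Hfy).
  assert (C * dist y y0 <= eps).
  { apply Rle_trans with ((C + 1) * (eps / (C + 1))); [pose proof (dist_nonneg y y0); nra|].
    right. field. lra. }
  pose proof (dist_nonneg y y0). nra.
Qed.

Lemma regular_subgradient_ray {n} (f : Rn n -> option R) (y v : Rn n) :
  regular_subgradient f y v -> forall eps, 0 < eps ->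
  exists fy d, f y = Some fy /\ 0 < d /\
    forall tau fz, 0 <= tau -> tau * nv v < d -> f (ray y tau v) = Some fz ->
      fz - fy >= tau * nv v * (nv v - eps).
Proof.
  intros [fy [Hfy Hreg]] eps Heps. destruct (Hreg eps Heps) as [d [Hd Hnear]].
  exists fy, d. split; [exact Hfy|]. split; [exact Hd|].
  intros tau fz Htau Hsmall Hfz.
  assert (Hdist : dist (ray y tau v) y = tau * nv v) by (rewrite dist_ray, Rabs_pos_eq; auto).
  specialize (Hnear (ray y tau v) ltac:(lra)). rewrite Hfz, inner_diff_ray, Hdist in Hnear. lra.
Qed.

Lemma regular_subgradient_norm_le {n} (f : Rn n -> option R) xb dL L0 (y v : Rn n) :
  lipschitz_on f xb dL L0 -> 0 <= L0 -> dist y xb < dL -> regular_subgradient f y v -> nv v <= L0.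
Proof.
  intros HL HL0 Hy Hreg. destruct (Rle_dec (nv v) 0) as [|Hpos]; [lra|].
  apply le_of_le_plus_eps. intros eps Heps.
  destruct (regular_subgradient_ray f y v Hreg eps Heps) as [fy [d [Hfy [Hd Hray]]]].
  pose proof (Rmin_l d (dL - dist y xb)); pose proof (Rmin_r d (dL - dist y xb)).
  set (m := Rmin d (dL - dist y xb)) in *.
  assert (Hm : 0 < m) by (apply Rmin_pos; lra).
  set (tau := m / (2 * nv v)).
  assert (Htau : tau * nv v = m / 2) by (unfold tau; field; lra).
  assert (Htau0 : 0 <= tau) by (unfold tau; apply Rlt_le, Rdiv_lt_0_compat; lra).
  set (z := ray y tau v).
  assert (Hzy : dist z y = tau * nv v) by (unfold z; rewrite dist_ray, Rabs_pos_eq; auto).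
  assert (Hz : dist z xb < dL) by (pose proof (dist_triangle z y xb); lra).
  specialize (Hray tau (fv f z) Htau0 ltac:(lra) (lipschitz_on_some f xb dL L0 z HL Hz)).
  rewrite (lipschitz_on_some f xb dL L0 y HL Hy) in Hfy. injection Hfy as <-.
  pose proof (lipschitz_on_fv f xb dL L0 z y HL Hz Hy). pose proof (Rle_abs (fv f z - fv f y)).
  rewrite Hzy in *. assert (0 < tau * nv v) by lra.
  apply (Rmult_le_reg_l (tau * nv v)); [assumption|]. nra.
Qed.

Lemma regular_subgradient_calm {n} (f : Rn n -> option R) xb dL L0 (v : Rn n) b :
  lipschitz_on f xb dL L0 -> 0 < dL -> regular_subgradient f xb v -> 0 <= b ->
  eventually_below (calm_set f xb) b -> nv v <= b.
Proof.
  intros HL HdL Hreg Hb [d0 [Hd0 Hcalm]]. destruct (Rle_dec (nv v) 0) as [|Hpos]; [lra|].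
  apply le_of_le_plus_eps. intros eps Heps.
  destruct (regular_subgradient_ray f xb v Hreg eps Heps) as [fb [d [Hfb [Hd Hray]]]].
  pose proof (Rmin_l (Rmin d d0) dL); pose proof (Rmin_r (Rmin d d0) dL).
  pose proof (Rmin_l d d0); pose proof (Rmin_r d d0).
  assert (Hm : 0 < Rmin (Rmin d d0) dL) by (apply Rmin_pos; [apply Rmin_pos|]; auto).
  set (m := Rmin (Rmin d d0) dL) in *.
  set (tau := m / (2 * nv v)).
  assert (Htau : tau * nv v = m / 2) by (unfold tau; field; lra).
  assert (Htau0 : 0 <= tau) by (unfold tau; apply Rlt_le, Rdiv_lt_0_compat; lra).
  set (y := ray xb tau v).
  assert (Hyx : dist y xb = tau * nv v) by (unfold y; rewrite dist_ray, Rabs_pos_eq; auto).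
  assert (Hy : dist y xb < dL) by lra.
  assert (Hne : y <> xb) by (intros Heq; rewrite Heq, dist_self in Hyx; lra).
  specialize (Hray tau (fv f y) Htau0 ltac:(lra) (lipschitz_on_some f xb dL L0 y HL Hy)).
  assert (Hq : calm_set f xb d0 (dq (f y) (f xb) (dist y xb))).
  { exists y. split; [exact Hne|]. split; [lra | reflexivity]. }
  specialize (Hcalm _ Hq).
  rewrite (lipschitz_on_some f xb dL L0 y HL Hy), Hfb in Hcalm. simpl in Hcalm.
  rewrite Hyx in Hcalm. assert (0 < tau * nv v) by lra.
  apply (Rmult_le_compat_r (tau * nv v)) in Hcalm; [|lra].
  unfold Rdiv in Hcalm. rewrite Rmult_assoc, Rinv_l in Hcalm by lra.
  pose proof (Rle_abs (fv f y - fb)).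
  apply (Rmult_le_reg_l (tau * nv v)); [assumption|]. nra.
Qed.

Lemma limiting_subgradient {n} (f : Rn n -> option R) xb dL L0 (ys vs : nat -> Rn n) s :
  lipschitz_on f xb dL L0 -> 0 <= L0 ->
  (forall k, dist (ys k) xb < dL) -> Un_cv (fun k => dist (ys k) xb) 0 ->
  (forall k, regular_subgradient f (ys k) (vs k)) -> (forall k, s <= nv (vs k)) ->
  exists v, subgradient f xb v /\ s <= nv v.
Proof.
  intros HL HL0 Hball Hcv Hreg Hs.
  destruct (bounded_Rn_subseq vs) as [phi [v [Hphi Hcvv]]].
  { intros i Hi. exists L0. intros k. apply Rle_trans with (nv (vs k)).
    - apply coord_le_nrm, Hi.
    - apply (regular_subgradient_norm_le f xb dL L0 (ys k)); auto. }
  assert (HdL : 0 < dL) by (pose proof (Hball O); pose proof (dist_nonneg (ys O) xb); lra).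
  assert (Hxb : dist xb xb < dL) by (rewrite dist_self; exact HdL).
  assert (Hcvs : Un_cv (fun k => dist (ys (phi k)) xb) 0)
    by exact (cv_extraction (fun k => dist (ys k) xb) 0 phi Hphi Hcv).
  exists v. split.
  - exists (fun k => ys (phi k)), (fun k => vs (phi k)), (fun k => fv f (ys (phi k))), (fv f xb).
    split; [exact Hcvs|].
    split; [intros k; apply Hreg|].
    split; [exact Hcvv|].
    split; [intros k; apply (lipschitz_on_some f xb dL L0); auto|].
    split; [apply (lipschitz_on_some f xb dL L0); auto|].
    (* [f] is continuous at [xb], being Lipschitz there *)
    intros eps Heps.
    destruct (dist_cv_eventually (fun k => ys (phi k)) xb (eps / (L0 + 1))) as [N HN];
      [exact Hcvs | apply Rdiv_lt_0_compat; lra|].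
    exists N. intros k Hk. specialize (HN k Hk). unfold R_dist.
    pose proof (lipschitz_on_fv f xb dL L0 _ _ HL (Hball (phi k)) Hxb).
    apply Rle_lt_trans with ((L0 + 1) * dist (ys (phi k)) xb);
      [pose proof (dist_nonneg (ys (phi k)) xb); nra|].
    apply Rlt_le_trans with ((L0 + 1) * (eps / (L0 + 1))); [apply Rmult_lt_compat_l; lra|].
    right. field. lra.
  - apply le_of_le_plus_eps. intros eps Heps.
    destruct (dist_cv_eventually _ _ eps Hcvv Heps) as [N HN]. specialize (HN N (le_n N)).
    pose proof (nv_triangle (vs (phi N)) v). specialize (Hs (phi N)). lra.
Qed.

(** * A steep pair of points yields a large regular subgradient

    Given [x <> x'] with [f x' - f x > a |x - x'|] and [0 <= s < a], we minimise
    [Phi = f - s t + pen] over [D = {y | t y <= r, |y - x| <= Rr}], where [t] is the coordinate along the unit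
    vector [e] from [x] to [x'] and [pen] penalises the distance to [x'] along [e]
    and to the line through [x] and [x'].  The minimiser lies in the interior of [D],
    and [s e - grad pen] is a proximal, hence regular, subgradient there, of norm
    [>= s].  This is a quantitative form of the Zagrodny-type mean value inequality. *)

Section SteepPair.

Variable n : nat.
Variable f : Rn n -> option R.
Variables xb x x' : Rn n.
Variables dL L0 s a : R.
Hypothesis HL : lipschitz_on f xb dL L0.
Hypothesis HL0 : 0 <= L0.
Hypothesis Hs : 0 <= s.
Hypothesis Hsa : s < a.
Hypothesis Hxx : x <> x'.

(** The scales of the construction: [r = |x - x'|], the slope margin [th = a - s],
    the radius [Rr = lam r] of the domain [D], and penalty weights [al <= K] chosen so
    that [Phi] is smaller at [x] than anywhere on the boundary of [D]. *)
Let r := dist x x'.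
Let th := a - s.
Let M := L0 + s.
Let lam := 8 * M / th + 2.
Let Rr := lam * r.
Let al := th / (4 * r).
Let K := M * M / (th * r) + al.

Hypothesis Hgap : fv f x' - fv f x > a * r.
Hypothesis Hball : dist x xb + Rr < dL.

(** [e] is the unit vector from [x] to [x'], [t y] the coordinate of [y - x] along
    [e], and [grad z] the gradient of the penalty [pen] at [z]. *)
Let e (i : nat) : R := (pt x' i - pt x i) / r.
Let t (y : Rn n) : R := sumprod n e (diff y x).
Let pen (y : Rn n) : R := al * ((t y - r) * (t y - r)) + K * (dist y x * dist y x - t y * t y).
Let grad (z : Rn n) (i : nat) : R := (2 * al * (t z - r) - 2 * K * t z) * e i + 2 * K * diff z x i.
Let Phi (y : Rn n) : R := fv f y - s * t y + pen y.
Let D (y : Rn n) : Prop := t y <= r /\ dist y x <= Rr.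

Lemma r_pos : 0 < r.
Proof. apply dist_pos, Hxx. Qed.

Lemma th_pos : 0 < th.
Proof. unfold th. lra. Qed.

Lemma lam_ge_2 : 2 <= lam.
Proof.
  pose proof th_pos. unfold lam. assert (0 <= 8 * M / th) by (apply Rdiv_nonneg; unfold M; lra). lra.
Qed.

Lemma lam_th : lam * th = 8 * M + 2 * th.
Proof. pose proof th_pos. unfold lam. field. lra. Qed.

Lemma al_pos : 0 < al.
Proof. pose proof th_pos; pose proof r_pos. unfold al. apply Rdiv_lt_0_compat; lra. Qed.

Lemma al_r_sq : al * (r * r) = th * r / 4.
Proof. pose proof r_pos. unfold al. field. lra. Qed.

Lemma al_le_K : al <= K.
Proof.
  pose proof th_pos; pose proof r_pos. unfold K.
  assert (0 <= M * M / (th * r)) by (apply Rdiv_nonneg; nra). lra.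
Qed.

Lemma K_large : M * M <= K * (th * r).
Proof.
  pose proof th_pos; pose proof r_pos; pose proof al_pos. unfold K.
  rewrite Rmult_plus_distr_r. replace (M * M / (th * r) * (th * r)) with (M * M) by (field; split; lra).
  assert (0 < th * r) by nra. assert (0 <= al * (th * r)) by nra. lra.
Qed.

Lemma e_unit : sumprod n e e = 1.
Proof.
  pose proof r_pos.
  rewrite (sp_ext n e (fun i => / r * diff x' x i) e (fun i => / r * diff x' x i))
    by (intros; unfold e, diff; split; field; lra).
  rewrite sp_scal_l, sp_sym, sp_scal_l, <- (dist_sq x' x), dist_sym. fold r. field. lra.
Qed.

Lemma t_sub (y z : Rn n) : t y - t z = sumprod n e (diff y z).
Proof.
  unfold t. rewrite (sp_ext n e e (diff y x) (fun i => 1 * diff z x i + 1 * diff y z i))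
    by (intros; unfold diff; split; ring).
  rewrite sp_sym, sp_linl, !(sp_sym n _ e). ring.
Qed.

Lemma e_pairing_le (y z : Rn n) : Rabs (sumprod n e (diff y z)) <= dist y z.
Proof. apply unit_pairing_le, e_unit. Qed.

Lemma t_lipschitz (y z : Rn n) : t y - t z <= dist y z.
Proof. rewrite t_sub. pose proof (e_pairing_le y z). pose proof (Rle_abs (sumprod n e (diff y z))). lra. Qed.

Lemma t_x : t x = 0.
Proof.
  unfold t. rewrite (sp_ext n e e (diff x x) (fun i => 0 * e i)) by (intros; unfold diff; split; ring).
  rewrite sp_sym, sp_scal_l. ring.
Qed.

Lemma t_le_dist (y : Rn n) : t y <= dist y x.
Proof. pose proof (t_lipschitz y x). rewrite t_x in H. lra. Qed.

Lemma t_sq_le (y : Rn n) : t y * t y <= dist y x * dist y x.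
Proof. rewrite dist_sq. apply unit_pairing_sq_le, e_unit. Qed.

Lemma pen_expansion (y z : Rn n) :
  let tau := sumprod n e (diff y z) in
  pen y - pen z = sumprod n (grad z) (diff y z) + al * (tau * tau)
                  + K * (dist y z * dist y z - tau * tau).
Proof.
  intros tau.
  assert (Ht : t y = t z + tau) by (pose proof (t_sub y z); unfold tau; lra).
  assert (Hd : dist y x * dist y x
               = dist z x * dist z x + 2 * 1 * sumprod n (diff z x) (diff y z) + 1 * 1 * (dist y z * dist y z)).
  { rewrite !dist_sq, <- sp_quadratic. apply sp_ext. intros; unfold diff; split; ring. }
  assert (Hg : sumprod n (grad z) (diff y z)
               = (2 * al * (t z - r) - 2 * K * t z) * tau + 2 * K * sumprod n (diff z x) (diff y z))
    by (unfold grad; apply sp_linl).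
  unfold pen. rewrite Ht, Hd, Hg. ring.
Qed.

Lemma pen_bounds (y z : Rn n) :
  sumprod n (grad z) (diff y z) <= pen y - pen z
  <= sumprod n (grad z) (diff y z) + (al + K) * (dist y z * dist y z).
Proof.
  pose proof (pen_expansion y z) as Hexp. simpl in Hexp.
  pose proof (unit_pairing_sq_le n e (diff y z) e_unit) as Htau. rewrite <- dist_sq in Htau.
  set (tau := sumprod n e (diff y z)) in *.
  pose proof al_pos; pose proof al_le_K.
  assert (0 <= tau * tau) by nra.
  assert (0 <= K * (dist y z * dist y z - tau * tau)) by (apply Rmult_le_pos; lra).
  assert (al * (tau * tau) <= al * (dist y z * dist y z)) by (apply Rmult_le_compat_l; lra).
  assert (K * (dist y z * dist y z - tau * tau) <= K * (dist y z * dist y z)) by nra.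
  split; nra.
Qed.

Lemma pen_nonneg (y : Rn n) : 0 <= pen y.
Proof.
  pose proof (t_sq_le y); pose proof al_pos; pose proof al_le_K.
  assert (0 <= al * ((t y - r) * (t y - r))) by (apply Rmult_le_pos; [lra | apply Rle_0_sqr]).
  assert (0 <= K * (dist y x * dist y x - t y * t y)) by (apply Rmult_le_pos; lra).
  unfold pen. lra.
Qed.

Lemma D_ball (y : Rn n) : D y -> dist y xb < dL.
Proof. intros [_ Hy]. pose proof (dist_triangle y x xb). lra. Qed.

Lemma x'_ball : dist x' xb < dL.
Proof.
  pose proof (dist_triangle x' x xb). rewrite (dist_sym x' x) in H. fold r in H.
  pose proof lam_ge_2; pose proof r_pos. unfold Rr in Hball. nra.
Qed.

Lemma D_x : D x.
Proof. pose proof r_pos; pose proof lam_ge_2. split; [rewrite t_x | rewrite dist_self; unfold Rr]; nra. Qed.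

Lemma Phi_lower_lipschitz (y z : Rn n) :
  D y -> D z -> Phi z <= Phi y + (L0 + s + nrm n (grad z)) * dist y z.
Proof.
  intros Hy Hz.
  pose proof (lipschitz_on_fv f xb dL L0 y z HL (D_ball y Hy) (D_ball z Hz)) as Hf.
  pose proof (Rle_abs (- (fv f y - fv f z))). rewrite Rabs_Ropp in *.
  pose proof (t_lipschitz y z) as Ht.
  destruct (pen_bounds y z) as [Hpen _].
  pose proof (cauchy_schwarz n (grad z) (diff y z)) as Hcs.
  change (nrm n (diff y z)) with (dist y z) in Hcs.
  pose proof (Rle_abs (- sumprod n (grad z) (diff y z))). rewrite Rabs_Ropp in *.
  assert (s * (t y - t z) <= s * dist y z) by (apply Rmult_le_compat_l; lra).
  replace ((L0 + s + nrm n (grad z)) * dist y z)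
    with (L0 * dist y z + s * dist y z + nrm n (grad z) * dist y z) by ring.
  unfold Phi. lra.
Qed.

Lemma Phi_bounded_below (y : Rn n) : D y -> fv f x - M * Rr <= Phi y.
Proof.
  intros Hy. pose proof (lipschitz_on_fv f xb dL L0 y x HL (D_ball y Hy) (D_ball x D_x)) as Hf.
  pose proof (Rle_abs (- (fv f y - fv f x))). rewrite Rabs_Ropp in *.
  destruct Hy as [_ Hy]. pose proof (t_le_dist y). pose proof (pen_nonneg y).
  pose proof (dist_nonneg y x).
  assert (L0 * dist y x <= L0 * Rr) by (apply Rmult_le_compat_l; lra).
  assert (s * t y <= s * Rr) by (apply Rmult_le_compat_l; lra).
  unfold Phi, M. lra.
Qed.

(** [D] is sequentially closed, being cut out by two [1]-Lipschitz functions. *)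
Lemma D_closed (ys : nat -> Rn n) (z : Rn n) :
  (forall k, D (ys k)) -> Un_cv (fun k => dist (ys k) z) 0 -> D z.
Proof.
  intros HD Hcv. split.
  - apply (le_of_cv_lipschitz1 t ys z r); [exact t_lipschitz | intros k; apply HD | exact Hcv].
  - apply (le_of_cv_lipschitz1 (fun y => dist y x) ys z Rr); [|intros k; apply HD | exact Hcv].
    intros y w. pose proof (dist_triangle y w x). lra.
Qed.

Lemma Phi_x : Phi x = fv f x + th * r / 4.
Proof. unfold Phi, pen. rewrite t_x, dist_self, <- al_r_sq. ring. Qed.

(** On the face [t = r] of [D], [Phi] exceeds [Phi x]: the slope of [f] between
    [x] and [x'] beats [s], and the penalty controls the Lipschitz loss. *)
Lemma Phi_face (y : Rn n) : D y -> t y = r -> Phi x < Phi y.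
Proof.
  intros Hy Htr. pose proof r_pos; pose proof th_pos; pose proof al_le_K; pose proof al_pos.
  set (p := dist y x').
  assert (Hp : p * p = dist y x * dist y x - r * r).
  { unfold p. rewrite !dist_sq.
    rewrite (sp_ext n (diff y x') (fun i => diff y x i + (- r) * e i)
                    (diff y x') (fun i => diff y x i + (- r) * e i))
      by (intros; unfold diff, e; split; field; lra).
    rewrite sp_quadratic, e_unit, (sp_sym n (diff y x) e). fold (t y). rewrite Htr. ring. }
  assert (HPhi : Phi y = fv f y - s * r + K * (p * p)) by (unfold Phi, pen; rewrite Hp, Htr; ring).
  pose proof (lipschitz_on_fv f xb dL L0 y x' HL (D_ball y Hy) x'_ball) as Hf. fold p in Hf.
  pose proof (Rle_abs (- (fv f y - fv f x'))). rewrite Rabs_Ropp in *.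
  assert (Hquad : 0 <= K * (p * p) - L0 * p + th * r / 4).
  { assert (HK : 0 < K) by lra.
    assert (L0 * L0 <= K * (th * r)) by (pose proof K_large; unfold M in *; nra).
    apply (Rmult_le_reg_l (4 * K)); [lra|].
    replace (4 * K * 0) with 0 by ring.
    replace (4 * K * (K * (p * p) - L0 * p + th * r / 4))
      with ((2 * K * p - L0) * (2 * K * p - L0) + (K * (th * r) - L0 * L0)) by field.
    pose proof (Rle_0_sqr (2 * K * p - L0)). unfold Rsqr in *. lra. }
  assert (0 < th * r) by nra. assert (a * r - s * r = th * r) by (unfold th; ring).
  rewrite HPhi, Phi_x. lra.
Qed.

(** On the sphere [|y - x| = Rr], the penalty alone exceeds everything else. *)
Lemma Phi_sphere (y : Rn n) : D y -> dist y x = Rr -> Phi x < Phi y.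
Proof.
  intros [Hty _] HyR. pose proof r_pos; pose proof th_pos; pose proof al_le_K; pose proof al_pos.
  pose proof lam_ge_2.
  pose proof (lipschitz_on_fv f xb dL L0 y x HL (D_ball y (conj Hty (Req_le _ _ HyR))) (D_ball x D_x)) as Hf.
  pose proof (Rle_abs (- (fv f y - fv f x))). rewrite Rabs_Ropp, HyR in *.
  assert (Hpen : al * (Rr * Rr - r * r) <= pen y).
  { pose proof (t_sq_le y) as Hsq. rewrite HyR in Hsq. unfold pen. rewrite HyR.
    assert (al * (Rr * Rr - t y * t y) <= K * (Rr * Rr - t y * t y)) by (apply Rmult_le_compat_r; lra).
    assert (r * t y <= r * r) by (apply Rmult_le_compat_l; lra). nra. }
  assert (Hsplit : al * (Rr * Rr - r * r)
                   = lam * r * (L0 + 2 * s) + L0 * Rr + lam * r * th / 2 - th * r / 4).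
  { rewrite Rmult_minus_distr_l, al_r_sq. unfold Rr, al.
    replace (lam * r * (L0 + 2 * s) + L0 * (lam * r) + lam * r * th / 2)
      with (lam * r * (lam * th) / 4) by (rewrite lam_th; unfold M; field).
    field. lra. }
  assert (s * t y <= s * r) by (apply Rmult_le_compat_l; lra).
  assert (0 <= (lam - 2) * (r * (L0 + 2 * s))) by (apply Rmult_le_pos; [|apply Rmult_le_pos]; lra).
  assert (0 <= (lam - 2) * (r * th)) by (apply Rmult_le_pos; [|apply Rmult_le_pos]; lra).
  assert (0 < th * r) by nra. assert (0 <= s * r) by nra.
  assert (lam * r * (L0 + 2 * s) >= 2 * (s * r)) by nra.
  assert (lam * r * th / 2 >= th * r) by nra.
  rewrite Phi_x. unfold Phi. lra.
Qed.

Lemma interior_minimizer :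
  exists z, D z /\ t z < r /\ dist z x < Rr /\ forall y, D y -> Phi z <= Phi y.
Proof.
  destruct (min_attained D Phi x Rr (fv f x - M * Rr)) as [z [Hz Hmin]].
  - exists x. exact D_x.
  - intros y [_ Hy]. exact Hy.
  - exact Phi_bounded_below.
  - exact D_closed.
  - intros z Hz. exists (L0 + s + nrm n (grad z)). split; [pose proof (nrm_nonneg n (grad z)); lra|].
    intros y Hy. apply Phi_lower_lipschitz; assumption.
  - exists z. pose proof (Hmin x D_x) as Hzx. destruct Hz as [Htz Hdz].
    split; [split; assumption|]. split; [|split; [|exact Hmin]].
    + destruct Htz as [|Hface]; [assumption|]. pose proof (Phi_face z (conj (Req_le _ _ Hface) Hdz) Hface). lra.
    + destruct Hdz as [|Hsphere]; [assumption|]. pose proof (Phi_sphere z (conj Htz (Req_le _ _ Hsphere)) Hsphere). lra.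
Qed.

(** At an interior minimiser [z], [s e - grad z] is a proximal subgradient of [f]
    whose component along [e] is at least [s]. *)
Lemma steep_pair_subgradient_oriented :
  exists y v, dist y x <= Rr /\ regular_subgradient f y v /\ s <= nv v.
Proof.
  destruct interior_minimizer as [z [Hz [Htz [Hdz Hmin]]]].
  set (v := mkRn n (fun i => s * e i + (-1) * grad z i)).
  assert (Hv : forall h, sumprod n (pt v) h = s * sumprod n e h + (-1) * sumprod n (grad z) h).
  { intros h. rewrite <- sp_linl. apply sp_ext. intros i Hi. unfold v. rewrite mkRn_coord by exact Hi. auto. }
  exists z, v. split; [lra|]. split.
  - pose proof al_pos; pose proof al_le_K.
    apply (proximal_regular_subgradient f z v (fv f z) (Rmin (r - t z) (Rr - dist z x)) (al + K)).
    + apply (lipschitz_on_some f xb dL L0 z HL), D_ball, Hz.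
    + apply Rmin_pos; lra.
    + lra.
    + intros y fy Hy Hfy. pose proof (Rmin_l (r - t z) (Rr - dist z x)); pose proof (Rmin_r (r - t z) (Rr - dist z x)).
      assert (Hy' : D y).
      { split; [pose proof (t_lipschitz y z); lra|]. pose proof (dist_triangle y z x). lra. }
      rewrite (lipschitz_on_some f xb dL L0 y HL (D_ball y Hy')) in Hfy. injection Hfy as <-.
      specialize (Hmin y Hy'). destruct (pen_bounds y z) as [_ Hpen].
      unfold inner_diff. rewrite Hv, <- t_sub. unfold Phi in Hmin. lra.
  - (* [<v, e> = s - 2 al (t z - r) >= s] and [e] is a unit vector *)
    assert (Hve : sumprod n (pt v) e = s - 2 * al * (t z - r)).
    { rewrite Hv, e_unit. unfold grad. rewrite sp_linl, e_unit, (sp_sym n (diff z x) e). fold (t z). ring. }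
    pose proof (Rle_abs (sumprod n (pt v) e)).
    pose proof (unit_pairing_le n e (pt v) e_unit). rewrite (sp_sym n e (pt v)) in H0.
    pose proof al_pos. assert (0 <= al * (r - t z)) by (apply Rmult_le_pos; lra).
    unfold nv. lra.
Qed.

End SteepPair.

Lemma steep_pair_subgradient {n} (f : Rn n -> option R) xb dL L0 s a :
  lipschitz_on f xb dL L0 -> 0 <= L0 -> 0 <= s -> s < a ->
  exists C, 1 <= C /\ forall rho (x x' : Rn n),
    C * rho < dL -> x <> x' -> dist x xb < rho -> dist x' xb < rho ->
    a * dist x x' < Rabs (fv f x - fv f x') ->
    exists y v, dist y xb <= C * rho /\ regular_subgradient f y v /\ s <= nv v.
Proof.
  intros HL HL0 Hs Hsa.
  set (lam := 8 * (L0 + s) / (a - s) + 2).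
  assert (Hlam : 2 <= lam).
  { unfold lam. assert (0 <= 8 * (L0 + s) / (a - s)) by (apply Rdiv_nonneg; lra). lra. }
  exists (1 + 2 * lam). split; [lra|].
  intros rho x x' HC Hxx Hx Hx' Hgap.
  assert (Hr : dist x x' <= 2 * rho) by (pose proof (dist_triangle x xb x'); rewrite (dist_sym xb x') in H; lra).
  assert (Hlr : lam * dist x x' <= 2 * lam * rho) by nra.
  destruct (Rle_dec (fv f x) (fv f x')) as [Hle|Hgt].
  - rewrite Rabs_minus_sym, Rabs_pos_eq in Hgap by lra.
    destruct (steep_pair_subgradient_oriented n f xb x x' dL L0 s a HL HL0 Hs Hsa Hxx ltac:(lra) ltac:(fold lam; lra))
      as [y [v [Hy [Hreg Hv]]]].
    exists y, v. split; [|auto]. fold lam in Hy. pose proof (dist_triangle y x xb). lra.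
  - rewrite Rabs_pos_eq in Hgap by lra. rewrite dist_sym in Hgap, Hlr.
    destruct (steep_pair_subgradient_oriented n f xb x' x dL L0 s a HL HL0 Hs Hsa (not_eq_sym Hxx) ltac:(lra) ltac:(fold lam; lra))
      as [y [v [Hy [Hreg Hv]]]].
    exists y, v. split; [|auto]. fold lam in Hy. pose proof (dist_triangle y x' xb). lra.
Qed.

(** Calmness quotients are Lipschitz quotients with [x' = xb], so [calm <= lip]. *)
Lemma calm_set_sub_lip_set {n} (f : Rn n -> option R) xb d q : calm_set f xb d q -> lip_set f xb d q.
Proof.
  intros [x [Hne [Hx ->]]]. exists x, xb. repeat split; auto.
  rewrite dist_self. pose proof (dist_nonneg x xb). lra.
Qed.

Lemma dq_nonneg (p q : option R) d : 0 < d -> ER_le (ERfin 0) (dq p q d).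
Proof. intros Hd. destruct p, q; simpl; auto. apply Rdiv_nonneg; [apply Rabs_pos | exact Hd]. Qed.

(** When calm is eventually below a negative number, no point near [xb] but [xb]
    exists, so the Lipschitz quotients are vacuously bounded. *)
Lemma lip_below_of_calm_below_negative {n} (f : Rn n -> option R) xb b a :
  b < 0 -> eventually_below (calm_set f xb) b -> eventually_below (lip_set f xb) a.
Proof.
  intros Hb [d [Hd Hcalm]]. exists d. split; [exact Hd|].
  intros q [x [x' [Hxx [Hx [Hx' ->]]]]]. exfalso.
  assert (Hfar : exists y, y <> xb /\ dist y xb < d).
  { destruct (classic (x = xb)) as [->|Hne]; [exists x'; auto | exists x; auto]. }
  destruct Hfar as [y [Hy Hyd]].
  assert (Hq : calm_set f xb d (dq (f y) (f xb) (dist y xb))) by (exists y; auto).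
  pose proof (ER_le_trans _ _ _ (dq_nonneg (f y) (f xb) (dist y xb) (dist_pos y xb Hy)) (Hcalm _ Hq)).
  simpl in H. lra.
Qed.

Lemma steep_pairs_of_not_lip_below {n} (f : Rn n -> option R) xb dL L0 a :
  lipschitz_on f xb dL L0 -> ~ eventually_below (lip_set f xb) a -> forall d, 0 < d <= dL ->
  exists x x', x <> x' /\ dist x xb < d /\ dist x' xb < d /\ a * dist x x' < Rabs (fv f x - fv f x').
Proof.
  intros HL Hnot d Hd. apply NNPP. intros Hnone. apply Hnot. exists d. split; [lra|].
  intros q [x [x' [Hxx [Hx [Hx' ->]]]]].
  rewrite (lipschitz_on_some f xb dL L0 x HL ltac:(lra)), (lipschitz_on_some f xb dL L0 x' HL ltac:(lra)).
  simpl. destruct (Rle_dec (Rabs (fv f x - fv f x') / dist x x') a) as [|Hq]; [assumption|].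
  exfalso. apply Hnone. exists x, x'. split; [|split; [|split]]; auto.
  apply Rnot_le_lt in Hq. pose proof (dist_pos x x' Hxx).
  apply (Rmult_lt_compat_r (dist x x')) in Hq; [|assumption].
  unfold Rdiv in Hq. rewrite Rmult_assoc, Rinv_l in Hq by lra. lra.
Qed.

(** Otherwise steep pairs
    near [xb] give regular subgradients of norm [>= (a+b)/2] at points tending to [xb];
    a limit is a subgradient at [xb], hence regular, which contradicts [calm f(xb) < b]. *)
Lemma lip_below_of_calm_below {n} (f : Rn n -> option R) xb :
  finite_lipschitz_near f xb -> (forall v, subgradient f xb v -> regular_subgradient f xb v) ->
  forall b a, b < a -> eventually_below (calm_set f xb) b -> eventually_below (lip_set f xb) a.
Proof.
  intros Hnear Hreg b a Hba Hcalm.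
  destruct (lipschitz_on_of_near f xb Hnear) as [dL [L0 [HdL [HL0 HL]]]].
  destruct (Rlt_dec b 0) as [Hb|Hb]; [exact (lip_below_of_calm_below_negative f xb b a Hb Hcalm)|].
  apply Rnot_lt_le in Hb.
  set (s := (a + b) / 2).
  destruct (steep_pair_subgradient f xb dL L0 s a HL HL0 ltac:(unfold s; lra) ltac:(unfold s; lra))
    as [C [HC Hsteep]].
  apply NNPP. intros Hnot.
  assert (Hsub : forall k, exists yv : Rn n * Rn n,
             dist (fst yv) xb <= dL / 2 * / (INR k + 1) /\
             regular_subgradient f (fst yv) (snd yv) /\ s <= nv (snd yv)).
  { intros k. pose proof (inv_succ_pos k); pose proof (inv_succ_le_1 k).
    set (rho := dL / (2 * C) * / (INR k + 1)).
    assert (HCrho : C * rho = dL / 2 * / (INR k + 1))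
      by (unfold rho; pose proof (pos_INR k); field; split; lra).
    assert (Hrho : 0 < rho <= dL).
    { assert (0 < rho) by (apply Rmult_lt_0_compat; [apply Rdiv_lt_0_compat|]; lra).
      assert (rho <= C * rho) by nra. nra. }
    destruct (steep_pairs_of_not_lip_below f xb dL L0 a HL Hnot rho Hrho) as [x [x' [Hxx [Hx [Hx' Hq]]]]].
    destruct (Hsteep rho x x' ltac:(nra) Hxx Hx Hx' Hq) as [y [v Hyv]].
    exists (y, v). rewrite <- HCrho. exact Hyv. }
  destruct (choice _ Hsub) as [yv Hyv].
  destruct (limiting_subgradient f xb dL L0 (fun k => fst (yv k)) (fun k => snd (yv k)) s HL HL0)
    as [v [Hv Hvs]].
  - intros k. pose proof (inv_succ_pos k); pose proof (inv_succ_le_1 k).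
    destruct (Hyv k) as [Hk _]. nra.
  - apply (cv0_of_le_inv_succ _ (dL / 2)). intros k. split; [apply dist_nonneg | apply Hyv].
  - intros k. apply Hyv.
  - intros k. apply Hyv.
  - pose proof (regular_subgradient_calm f xb dL L0 v b HL HdL (Hreg v Hv) Hb Hcalm).
    unfold s in Hvs. lra.
Qed.

Theorem mainTheorem2 (n : nat) (f : Rn n -> option R) (xb : Rn n)
  (Hlip : finite_lipschitz_near f xb)
  (Hreg : forall v, regular_subgradient f xb v <-> subgradient f xb v) :
  (exists c, is_calm f xb c) /\ (forall c, is_calm f xb c <-> is_lip f xb c).
Proof.
  destruct (limsup_exists (calm_set f xb)) as [c Hc].
  destruct (limsup_exists (lip_set f xb)) as [l Hl].
  assert (Hcl : c = l).
  { apply ER_le_antisym.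
    - apply (limsup_monotone _ _ c l Hc Hl), calm_set_sub_lip_set.
    - apply (limsup_le_of_transfer _ _ c l Hc Hl).
      apply lip_below_of_calm_below; [exact Hlip|]. intros v. apply Hreg. }
  subst l. split; [exists c; exact Hc|].
  intros c'. split; intros Hc'.
  - rewrite (limsup_unique _ _ _ Hc' Hc). exact Hl.
  - rewrite (limsup_unique _ _ _ Hc' Hl). exact Hc.
Qed.
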